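(* Let $N\in\mathbb{N}$; for $i=1,\ldots,N$ let $(\mathcal{X}_i,d_{\mathcal{X}_i})$ be a compact metric space and $\mu_i$ a Borel probability measure on $\mathcal{X}_i$; let $\boldsymbol{\mathcal{X}}:=\mathcal{X}_1\times\cdots\times\mathcal{X}_N$ with metric $\sum_id_{\mathcal{X}_i}$, and let $f:\boldsymbol{\mathcal{X}}\to\mathbb{R}$ be $L_f$-Lipschitz ($L_f>0$). Let finite collections $\mathcal{G}_i=\{g_{i,1},\ldots,g_{i,m_i}\}$ be given such that (BSS-a) or (BSS-b) holds; let $m:=\sum_im_i$, $\boldsymbol{g}(\boldsymbol{x})$ the vector of $g_{i,j}(x_i)$ and $\bar{\boldsymbol{g}}$ the vector of $\int g_{i,j}\,\mathrm{d}\mu_i$ (same order). Let $\boldsymbol{\mathcal{X}}^{\dagger(0)}\subseteq\boldsymbol{\mathcal{X}}$ be a finite set such that the linear program $\max\{y_0+\langle\bar{\boldsymbol{g}},\boldsymbol{y}\rangle:y_0+\langle\boldsymbol{g}(\boldsymbol{x}),\boldsymbol{y}\rangle\le f(\boldsymbol{x})\ \forall\boldsymbol{x}\in\boldsymbol{\mathcal{X}}^{\dagger(0)}\}$ has bounded superlevel sets, let $\mathtt{Oracle}$ be a global minimization oracle, and let $\epsilon_{\mathsf{LSIP}}>0$. Run Algorithm 1 with these inputs. Then: (i) Algorithm 1 terminates after finitely many iterations. (ii) $\alpha^{\mathsf{LB}}_{\mathsf{relax}}\le\text{(LSIP)}\le\alpha^{\mathsf{UB}}_{\mathsf{relax}}$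 and $\alpha^{\mathsf{UB}}_{\mathsf{relax}}-\alpha^{\mathsf{LB}}_{\mathsf{relax}}\le\epsilon_{\mathsf{LSIP}}$, where (LSIP) denotes the optimal value of $\max\{y_0+\langle\bar{\boldsymbol{g}},\boldsymbol{y}\rangle:y_0+\langle\boldsymbol{g}(\boldsymbol{x}),\boldsymbol{y}\rangle\le f(\boldsymbol{x})\ \forall\boldsymbol{x}\in\boldsymbol{\mathcal{X}}\}$. (iii) $(\hat y_0,\hat{\boldsymbol{y}})$ is an $\epsilon_{\mathsf{LSIP}}$-optimal solution of (LSIP) and $\hat y_0+\langle\bar{\boldsymbol{g}},\hat{\boldsymbol{y}}\rangle=\alpha^{\mathsf{LB}}_{\mathsf{relax}}$. (iv) $\hat{\mu}$ is an $\epsilon_{\mathsf{LSIP}}$-optimal solution of $\inf_{\mu\in\Gamma([\mu_1]_{\mathcal{G}_1},\ldots,[\mu_N]_{\mathcal{G}_N})}\int_{\boldsymbol{\mathcal{X}}}f\,\mathrm{d}\mu$ and $\int_{\boldsymbol{\mathcal{X}}}f\,\mathrm{d}\hat{\mu}=\alpha^{\mathsf{UB}}_{\mathsf{relax}}$.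
   Context: Conditions (with $\boldsymbol{g}_i(x_i):=(g_{i,1}(x_i),\ldots,g_{i,m_i}(x_i))^\top$): (BSS-a) for each $i$, $\operatorname{supp}(\mu_i)=\mathcal{X}_i$, each $g_{i,j}$ is continuous, and there exist $x_{i,1},\ldots,x_{i,m_i+1}\in\mathcal{X}_i$ with $\boldsymbol{g}_i(x_{i,1}),\ldots,\boldsymbol{g}_i(x_{i,m_i+1})$ affinely independent. (BSS-b) for each $i$, $\mathcal{X}_i$ is a compact subset of a Euclidean space with norm-induced metric, $\mathfrak{C}_i$ is a bounded polyhedral cover of $\mathcal{X}_i$ (finite collection of bounded polyhedra whose union contains $\mathcal{X}_i$, any two intersecting in a common face) with vertex set $V(\mathfrak{C}_i)\subseteq\mathcal{X}_i$, $\{g_{i,0},\ldots,g_{i,m_i}\}$ is a vertex interpolation function set for $\mathfrak{C}_i$ (non-negative functions indexed by the vertices with $g_{\boldsymbol{v}}(\boldsymbol{v}')=\mathbf{1}_{\{\boldsymbol{v}=\boldsymbol{v}'\}}$, summing to $1$ over the vertices of each face on that face, and vanishing on each face not having $\boldsymbol{v}$ as a vertex) with $\int g_{i,j}\,\mathrm{d}\mu_i>0$ for all $j$, and $\mathcal{G}_i=\{g_{i,1},\ldots,g_{i,m_i}\}$. Oracle: for $\boldsymbol{y}\in\mathbb{R}^m$ returns $(\boldsymbol{x}^\star,\beta^\star)$, $\boldsymbol{x}^\star$ a minimizer of $f(\boldsymbol{x})-\langle\boldsymbol{g}(\boldsymbol{x}),\boldsymbol{y}\rangle$ over $\boldsymbol{\mathcal{X}}$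 and $\beta^\star$ the minimal value. Algorithm 1: for $r=0,1,\ldots$: solve the LP $\alpha^{(r)}:=\max\{y_0+\langle\bar{\boldsymbol{g}},\boldsymbol{y}\rangle:y_0+\langle\boldsymbol{g}(\boldsymbol{x}),\boldsymbol{y}\rangle\le f(\boldsymbol{x})\ \forall\boldsymbol{x}\in\boldsymbol{\mathcal{X}}^{\dagger(r)}\}$, obtaining an optimizer $(y^{(r)}_0,\boldsymbol{y}^{(r)})$ and an optimizer $(\mu^{(r)}_{\boldsymbol{x}})_{\boldsymbol{x}\in\boldsymbol{\mathcal{X}}^{\dagger(r)}}$ of the dual LP $\min\{\sum_{\boldsymbol{x}}f(\boldsymbol{x})\mu_{\boldsymbol{x}}:\sum_{\boldsymbol{x}}\mu_{\boldsymbol{x}}=1,\ \sum_{\boldsymbol{x}}\boldsymbol{g}(\boldsymbol{x})\mu_{\boldsymbol{x}}=\bar{\boldsymbol{g}},\ \mu_{\boldsymbol{x}}\ge0\}$; call $\mathtt{Oracle}(\boldsymbol{y}^{(r)})$ obtaining $(\boldsymbol{x}^\star,s^{(r)})$; if $y^{(r)}_0-s^{(r)}\le\epsilon_{\mathsf{LSIP}}$, stop; else choose a finite $\boldsymbol{\mathcal{X}}^\star\subset\boldsymbol{\mathcal{X}}$ with $\boldsymbol{x}^\star\in\boldsymbol{\mathcal{X}}^\star$ and set $\boldsymbol{\mathcal{X}}^{\dagger(r+1)}:=\boldsymbol{\mathcal{X}}^{\dagger(r)}\cup\boldsymbol{\mathcal{X}}^\star$. At the terminal $r$, output $\alpha^{\mathsf{UB}}_{\mathsf{relax}}:=\alpha^{(r)}$,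 $\alpha^{\mathsf{LB}}_{\mathsf{relax}}:=\alpha^{(r)}-y^{(r)}_0+s^{(r)}$, $\hat y_0:=s^{(r)}$, $\hat{\boldsymbol{y}}:=\boldsymbol{y}^{(r)}$, $\hat{\mu}:=\sum_{\boldsymbol{x}\in\boldsymbol{\mathcal{X}}^{\dagger(r)}}\mu^{(r)}_{\boldsymbol{x}}\delta_{\boldsymbol{x}}$. $\Gamma([\mu_1]_{\mathcal{G}_1},\ldots,[\mu_N]_{\mathcal{G}_N})$: probability measures on $\boldsymbol{\mathcal{X}}$ whose $i$-th marginal $\nu$ satisfies $\int g\,\mathrm{d}\nu=\int g\,\mathrm{d}\mu_i$ for all $g\in\mathcal{G}_i$, for all $i$. An $\epsilon$-optimal solution is a feasible solution whose objective is within $\epsilon$ of the optimal value. *)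

From HB Require Import structures.
From mathcomp Require Import all_boot all_order all_algebra.
From mathcomp Require Import all_classical all_reals all_analysis.
Set Implicit Arguments. Unset Strict Implicit. Unset Printing Implicit Defensive.
Import Order.TTheory GRing.Theory Num.Theory.
Local Open Scope classical_set_scope.
Local Open Scope ring_scope.

Section Metric.
Context {R : realType} {T : Type}.

Definition is_metric (d : T -> T -> R) : Prop :=
  [/\ forall x y, d x y = 0 <-> x = y,
      forall x y, d x y = d y x &
      forall x y z, d x z <= d x y + d y z].

Definition mball (d : T -> T -> R) (x : T) (r : R) : set T :=
  [set y | d x y < r].

Definition mopen (d : T -> T -> R) (U : set T) : Prop :=
  forall x, U x -> exists2 r : R, 0 < r & mball d x r `<=` U.

Definition mcompact (d : T -> T -> R) : Prop :=
  forall C : set (set T), C `<=` mopen d -> (forall x, exists2 U, C U & U x) ->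
  exists (k : nat) (U : 'I_k -> set T),
    (forall l, C (U l)) /\ (forall x, exists l, U l x).

Definition mcontinuous (d : T -> T -> R) (g : T -> R) : Prop :=
  forall x (e : R), 0 < e -> exists2 del : R, 0 < del &
    forall y, d x y < del -> `|g x - g y| < e.

End Metric.

Definition borel {R : realType} {T : pointedType} (d : T -> T -> R) :=
  g_sigma_algebraType (mopen d).

Definition msupport {R : realType} {T : pointedType} (d : T -> T -> R)
  (mu : set (borel d) -> \bar R) : set T :=
  [set x | forall U : set T, mopen d U -> U x -> (0 < mu U)%E].

Definition is_probability {dd} {T : measurableType dd} {R : realType}
  (P : set T -> \bar R) : Prop :=
  [/\ P set0 = 0%E, (forall A, measurable A -> (0 <= P A)%E),
      semi_sigma_additive P & P setT = 1%E].

Definition affinely_independent {R : realType} {J : finType} {n : nat}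
  (v : 'I_n -> J -> R) : Prop :=
  forall c : 'I_n -> R, \sum_(k < n) c k = 0 ->
    (forall j, \sum_(k < n) c k * v k j = 0) -> forall k, c k = 0.

Section Polyhedra.
Context {R : realType} {n : nat}.

Definition dotv (u v : 'rV[R]_n) : R := \sum_(j < n) u ord0 j * v ord0 j.

Definition is_norm (nu : 'rV[R]_n -> R) : Prop :=
  [/\ forall x, nu x = 0 -> x = 0,
      forall (a : R) x, nu (a *: x) = `|a| * nu x &
      forall x y, nu (x + y) <= nu x + nu y].

Definition is_polyhedron (P : set 'rV[R]_n) : Prop :=
  exists (k : nat) (a : 'I_k -> 'rV[R]_n) (b : 'I_k -> R),
    P = [set x | forall l, dotv (a l) x <= b l].

Definition is_bounded (P : set 'rV[R]_n) : Prop :=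
  exists M : R, forall x, P x -> forall j, `|x ord0 j| <= M.

(** faces of P: intersections of P with the hyperplane of a valid
    inequality (includes P itself and the empty set) *)
Definition is_face (P F : set 'rV[R]_n) : Prop :=
  exists (c : 'rV[R]_n) (b : R),
    (forall x, P x -> dotv c x <= b) /\ F = P `&` [set x | dotv c x = b].

Definition is_vertex (P : set 'rV[R]_n) (v : 'rV[R]_n) : Prop :=
  is_face P [set v].

Definition bounded_polyhedral_cover (k : nat) (C : 'I_k -> set 'rV[R]_n)
  (X : set 'rV[R]_n) : Prop :=
  [/\ forall l, is_polyhedron (C l) /\ is_bounded (C l),
      X `<=` [set x | exists l, C l x] &
      forall l l', is_face (C l) (C l `&` C l') /\ is_face (C l') (C l `&` C l')].

Definition cover_vertices (k : nat) (C : 'I_k -> set 'rV[R]_n) : set 'rV[R]_n :=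
  [set v | exists l, is_vertex (C l) v].

End Polyhedra.

Unset Implicit Arguments.

Section LSIP.
Context {R : realType} {N : nat} (X : 'I_N -> pointedType)
  (d : forall i, X i -> X i -> R).

Definition dsum (x y : forall i, X i) : R := \sum_(i < N) d i (x i) (y i).

Definition prodX := borel dsum.

Context (m : 'I_N -> nat) (g : forall i, 'I_(m i) -> X i -> R)
  (mu : forall i, probability (borel (d i)) R) (f : (forall i, X i) -> R).

(** index set of the vector g(x) in R^m, m = sum_i m_i : pairs (i, j) *)
Definition gidx := {i : 'I_N & 'I_(m i)}.

Definition gvec (x : forall i, X i) (k : gidx) : R :=
  g (tag k) (tagged k) (x (tag k)).

Definition gbar (k : gidx) : R := Rintegral (mu (tag k)) setT (g (tag k) (tagged k)).

Definition lsip_obj (y0 : R) (y : gidx -> R) : R :=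
  y0 + \sum_(k : gidx) gbar k * y k.

Definition lsip_feasible (A : set (forall i, X i)) (y0 : R) (y : gidx -> R)
  : Prop :=
  forall x, A x -> y0 + \sum_(k : gidx) gvec x k * y k <= f x.

Definition lp_optimal (A : set (forall i, X i)) (y0 : R) (y : gidx -> R)
  : Prop :=
  lsip_feasible A y0 y /\
  forall y0' y', lsip_feasible A y0' y' -> lsip_obj y0' y' <= lsip_obj y0 y.

Definition lp_bounded_superlevel (A : set (forall i, X i)) : Prop :=
  forall t : R, exists M : R, forall y0 y, lsip_feasible A y0 y ->
    t <= lsip_obj y0 y -> `|y0| <= M /\ forall k, `|y k| <= M.

Definition dual_feasible (A : set (forall i, X i)) (w : (forall i, X i) -> R)
  : Prop :=
  [/\ forall x, A x -> 0 <= w x,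
      \sum_(x \in A) w x = 1 &
      forall k, \sum_(x \in A) gvec x k * w x = gbar k].

Definition dual_optimal (A : set (forall i, X i)) (w : (forall i, X i) -> R)
  : Prop :=
  dual_feasible A w /\
  forall w', dual_feasible A w' ->
    \sum_(x \in A) f x * w x <= \sum_(x \in A) f x * w' x.

(** Oracle(y) may return (xs, b) iff xs minimizes f - <g(.), y> over the
    product space and b is the minimal value *)
Definition oracle_output (y : gidx -> R) (xs : forall i, X i) (b : R) : Prop :=
  (forall x, f xs - \sum_(k : gidx) gvec xs k * y k
             <= f x - \sum_(k : gidx) gvec x k * y k) /\
  b = f xs - \sum_(k : gidx) gvec xs k * y k.

Definition lsip_value : \bar R :=
  ereal_sup [set z | exists y0 y, lsip_feasible setT y0 y /\
                                  z = (lsip_obj y0 y)%:E].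

Definition Gamma (P : set prodX -> \bar R) : Prop :=
  is_probability P /\
  forall i (j : 'I_(m i)),
    (\int[pushforward P (fun x : prodX => (x i : borel (d i)))]_z
        (g i j z)%:E = \int[mu i]_z (g i j z)%:E)%E.

Definition mmot_value : \bar R :=
  ereal_inf [set z | exists P, Gamma P /\ z = (\int[P]_x (f x)%:E)%E].

Definition discrete_measure (A : set (forall i, X i))
  (w : (forall i, X i) -> R) : set prodX -> \bar R :=
  fun B => (\sum_(x \in A) (w x)%:E * \d_(x : prodX) B)%E.

Definition BSS_a : Prop :=
  forall i, [/\ @msupport _ _ (d i) (mu i) = setT,
                forall j, mcontinuous (d i) (g i j) &
                exists p : 'I_(m i).+1 -> X i,
                  affinely_independent (fun l j => g i j (p l))].

(** Condition (BSS-b): X_i is (isometric to) a compact subset of a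
    Euclidean space R^n with a norm-induced metric, via e; C is a bounded
    polyhedral cover with vertex set inside X_i; the vertices are enumerated
    as vt 0, ..., vt m_i and Gv l = g_{i,l} is the interpolation function of
    vertex vt l, with g_{i,l+1} the given g_{i,l+1} (Gv 0 = g_{i,0}). *)
Definition BSS_b : Prop :=
  forall i, exists (n : nat) (nu : 'rV[R]_n -> R) (e : X i -> 'rV[R]_n)
    (nC : nat) (C : 'I_nC -> set 'rV[R]_n) (vt : 'I_(m i).+1 -> 'rV[R]_n)
    (Gv : 'I_(m i).+1 -> X i -> R),
    [/\ is_norm nu /\ (forall x y, d i x y = nu (e x - e y)),
        bounded_polyhedral_cover C (range e) /\
          cover_vertices C `<=` range e,
        injective vt /\ range vt = cover_vertices C,
        forall j : 'I_(m i), Gv (lift ord0 j) = g i j &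
        [/\ forall l x, 0 <= Gv l x,
            forall l l' x, e x = vt l' -> Gv l x = (l == l')%:R,
            forall c F, is_face (C c) F -> forall x, F (e x) ->
              \sum_(l < (m i).+1 | `[< is_vertex F (vt l) >]) Gv l x = 1,
            forall c F l, is_face (C c) F -> ~ is_vertex F (vt l) ->
              forall x, F (e x) -> Gv l x = 0 &
            forall l, (0 < \int[mu i]_x (Gv l x)%:E)%E]].

End LSIP.

(* Each relaxation only keeps the constraints at a finite set of points, so it
   is a finite LP: by strong duality (derived from Farkas' lemma, proved by
   Fourier-Motzkin elimination) its optimal dual weights form a discrete
   measure in Gamma whose integral of f is the upper bound aUB.  The oracle
   value s makes (s, y) feasible for the semi-infinite LP, which gives the
   lower bound aLB, and integrating the constraint against any measure of
   Gamma bounds the MMOT value from below by the same quantity.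
   Termination: if the gap never closed, the optimal y's would stay bounded
   (bounded superlevel sets), so by pigeonhole two oracle points x_r, x_r'
   with r < r' would have almost equal values of f and g; but x_r is a
   constraint of every later relaxation, which forces the gap at r' below
   eps. *)

From HB Require Import structures.
From Stdlib Require Import Classical.
From mathcomp Require Import all_boot all_order all_algebra.
From mathcomp Require Import all_classical all_reals all_analysis.
From mathcomp Require Import measurable_realfun finmap.
From mathcomp Require Import ring lra.
Import Order.TTheory GRing.Theory Num.Theory.
Local Open Scope classical_set_scope.
Local Open Scope ring_scope.
Set Implicit Arguments. Unset Strict Implicit. Unset Printing Implicit Defensive.

Section Farkas.
Variable R : realFieldType.
Context {J : finType}.

Definition dotf (u v : J -> R) := \sum_j u j * v j.

Lemma dotf_combl (a b : R) (u v w : J -> R) :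
  dotf (fun j => a * u j + b * v j) w = a * dotf u w + b * dotf v w.
Proof. by rewrite /dotf !mulr_sumr -big_split /=; apply: eq_bigr => j _; ring. Qed.

Lemma dotf_combr (a b : R) (u v w : J -> R) :
  dotf w (fun j => a * u j + b * v j) = a * dotf w u + b * dotf w v.
Proof. by rewrite /dotf !mulr_sumr -big_split /=; apply: eq_bigr => j _; ring. Qed.

Lemma dotf_scaler (k : R) (u v : J -> R) :
  dotf u (fun j => k * v j) = k * dotf u v.
Proof. by rewrite /dotf mulr_sumr; apply: eq_bigr => j _; ring. Qed.

Definition farkas_alternative (I : finType) (a : I -> J -> R) (c : J -> R) :=
  (exists lam : I -> R,
     (forall i, 0 <= lam i) /\ forall j, c j = \sum_i lam i * a i j) \/
  (exists z : J -> R, (forall i, dotf (a i) z <= 0) /\ 0 < dotf c z).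

Lemma farkas_alternative0 (a : 'I_0 -> J -> R) (c : J -> R) :
  farkas_alternative a c.
Proof.
have [c0|/forallPn[j0 cj0]] := boolP [forall j, c j == 0].
  left; exists (fun=> 0); split=> // j.
  by rewrite big_ord0; apply/eqP/(forallP c0).
right; exists c; split => [[]//|].
rewrite /dotf (bigD1 j0) //= ltr_pwDl ?sumr_ge0 // => [|j _].
  by rewrite -expr2 exprn_even_gt0.
by rewrite -expr2 sqr_ge0.
Qed.

(* Fourier-Motzkin step: the combination of [r] and [p] orthogonal to [z]. *)
Definition elim_row (p z r : J -> R) : J -> R :=
  fun j => dotf p z * r j + (- dotf r z) * p j.

Lemma dotf_elim_row (p z r z' : J -> R) :
  dotf (elim_row p z r) z' =
  dotf r (fun j => dotf p z * z' j + (- dotf p z') * z j).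
Proof. rewrite dotf_combl dotf_combr; ring. Qed.

Section FarkasStep.
Variables (m : nat) (a : 'I_m.+1 -> J -> R) (c z : J -> R).
Hypotheses (az_le0 : forall i : 'I_m, dotf (a (lift ord0 i)) z <= 0)
           (a0z_gt0 : 0 < dotf (a ord0) z)
           (cz_gt0 : 0 < dotf c z).

Lemma farkas_elim_cone (mu : 'I_m -> R) : (forall i, 0 <= mu i) ->
  (forall j, elim_row (a ord0) z c j =
             \sum_(i < m) mu i * elim_row (a ord0) z (a (lift ord0 i)) j) ->
  exists lam : 'I_m.+1 -> R,
    (forall i, 0 <= lam i) /\ forall j, c j = \sum_i lam i * a i j.
Proof.
move=> mu_ge0 c_comb; set t := dotf (a ord0) z.
set S := \sum_i mu i * dotf (a (lift ord0 i)) z.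
pose kap := (dotf c z - S) / t.
have S_le0 : S <= 0.
  rewrite -oppr_ge0 -sumrN; apply: sumr_ge0 => i _.
  by rewrite -mulrN mulr_ge0 // oppr_ge0.
have kap_ge0 : 0 <= kap.
  by rewrite divr_ge0 ?subr_ge0 ?(le_trans S_le0) ?ltW.
have t_kap : t * kap = dotf c z - S by rewrite mulrC divfK ?lt0r_neq0.
exists (fun i => if unlift ord0 i is Some i' then mu i' else kap).
split => [i|j]; first by case: (unlift ord0 i).
rewrite big_ord_recl /= unlift_none; under eq_bigr do rewrite liftK.
apply: (mulfI (lt0r_neq0 a0z_gt0)); rewrite mulrDr mulrA t_kap.
have := c_comb j; rewrite /elim_row -/t => cj.
rewrite (eq_bigr (fun i => t * (mu i * a (lift ord0 i) j) -
    mu i * dotf (a (lift ord0 i)) z * a ord0 j)) in cj; last by move=> i _; ring.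
by rewrite sumrB -mulr_sumr -mulr_suml -/S in cj; lra.
Qed.

Lemma farkas_elim_cert (z' : J -> R) :
  (forall i : 'I_m, dotf (elim_row (a ord0) z (a (lift ord0 i))) z' <= 0) ->
  0 < dotf (elim_row (a ord0) z c) z' ->
  exists z'' : J -> R, (forall i, dotf (a i) z'' <= 0) /\ 0 < dotf c z''.
Proof.
move=> a_z' c_z'.
exists (fun j => dotf (a ord0) z * z' j + (- dotf (a ord0) z') * z j).
split=> [i|]; last by rewrite -dotf_elim_row.
case: (unliftP ord0 i) => [i' ->|->]; first by rewrite -dotf_elim_row.
by rewrite dotf_combr; lra.
Qed.

End FarkasStep.

Lemma farkas_ord (m : nat) (a : 'I_m -> J -> R) (c : J -> R) :
  farkas_alternative a c.
Proof.
elim: m a c => [|m IH] a c; first exact: farkas_alternative0.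
pose a0 (i : 'I_m) := a (lift ord0 i).
have [[lam [lam_ge0 c_comb]]|[z [a0z_le0 cz_gt0]]] := IH a0 c.
  left; exists (fun i => if unlift ord0 i is Some i' then lam i' else 0).
  split=> [i|j]; first by case: (unlift ord0 i).
  rewrite big_ord_recl unlift_none mul0r add0r c_comb.
  by apply: eq_bigr => i _; rewrite liftK.
have [a0z_le0'|a0z_gt0] := lerP (dotf (a ord0) z) 0.
  right; exists z; split=> // i.
  by case: (unliftP ord0 i) => [i' ->|->] //; apply: a0z_le0.
have [[mu [mu_ge0 c_comb]]|[z' [a_z' c_z']]] :=
  IH (fun i => elim_row (a ord0) z (a0 i)) (elim_row (a ord0) z c).
  by left; apply: (farkas_elim_cone a0z_le0 a0z_gt0 cz_gt0 mu_ge0 c_comb).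
by right; apply: (farkas_elim_cert a_z' c_z').
Qed.

Lemma farkas (I : finType) (a : I -> J -> R) (c : J -> R) :
  farkas_alternative a c.
Proof.
have [[lam [lam_ge0 c_comb]]|[z [az_le0 cz_gt0]]] :=
  farkas_ord (fun k : 'I_#|I| => a (enum_val k)) c.
  left; exists (fun i => lam (enum_rank i)); split=> // j.
  rewrite c_comb [RHS](reindex _ (onW_bij _ (enum_val_bij I))).
  by apply: eq_bigr => k _; rewrite enum_valK.
by right; exists z; split=> // i; rewrite -(enum_rankK i).
Qed.

End Farkas.

Lemma big_optionE (R : nmodType) (J : finType) (F : option J -> R) :
  \sum_(o : option J) F o = F None + \sum_(j : J) F (Some j).
Proof.
have -> : \sum_(o : option J) F o = \sum_(o <- None :: map Some (enum J)) F o.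
  apply: perm_big; apply: uniq_perm.
  - exact: index_enum_uniq.
  - rewrite /= map_inj_uniq ?enum_uniq ?andbT; last by move=> ? ? [].
    by apply/mapP => -[].
  - by case=> [x|]; rewrite mem_index_enum /= ?inE // map_f // mem_enum.
by rewrite big_cons big_map big_enum.
Qed.

Section LPDuality.
Variables (R : realFieldType) (I J : finType).
Variables (a : I -> J -> R) (b : I -> R) (c : J -> R) (alpha : R) (z0 : J -> R).
Hypotheses (z0_feas : forall i, dotf (a i) z0 <= b i)
           (lp_le : forall z, (forall i, dotf (a i) z <= b i) -> dotf c z <= alpha).

Lemma lp_no_recession (y : J -> R) :
  (forall i, dotf (a i) y <= 0) -> dotf c y <= 0.
Proof.
move=> ay_le0; rewrite leNgt; apply/negP => cy_gt0.
pose T := (`|alpha - dotf c z0| + 1) / dotf c y.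
have T_ge0 : 0 <= T by rewrite divr_ge0 // ltW.
have Tcy : T * dotf c y = `|alpha - dotf c z0| + 1 by rewrite divfK ?lt0r_neq0.
have feas i : dotf (a i) (fun j => 1 * z0 j + T * y j) <= b i.
  rewrite dotf_combr mul1r.
  by have := z0_feas i; have := mulr_ge0_le0 T_ge0 (ay_le0 i); lra.
have := lp_le feas; rewrite dotf_combr mul1r Tcy.
by have := ler_norm (alpha - dotf c z0); lra.
Qed.

Lemma lp_duality : exists lam : I -> R,
  [/\ forall i, 0 <= lam i, forall j, c j = \sum_i lam i * a i j &
      \sum_i lam i * b i <= alpha].
Proof.
(* Farkas for the homogenized system in the unknowns [(tau, z)]: row [None]
   says [tau <= 0], row [Some i] says [b i * tau + dotf (a i) z <= 0]. *)
pose A (o : option I) (o' : option J) := match o, o' with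
  | Some i, Some j => a i j | Some i, None => b i
  | None, Some _ => 0 | None, None => 1 end.
pose C (o' : option J) := if o' is Some j then c j else alpha.
have dotA i z : dotf (A (Some i)) z = b i * z None + dotf (a i) (z \o Some).
  by rewrite /dotf big_optionE.
have dotA0 z : dotf (A None) z = z None.
  by rewrite /dotf big_optionE big1 ?mul1r ?addr0 // => j _; rewrite mul0r.
have dotC z : dotf C z = alpha * z None + dotf c (z \o Some).
  by rewrite /dotf big_optionE.
have [[lam [lam_ge0 C_comb]]|[z [Az_le0]]] := farkas A C.
  exists (lam \o Some); split=> [i|j|]; first exact: lam_ge0.
    by rewrite [LHS](C_comb (Some j)) big_optionE /= mulr0 add0r.
  have := C_comb None; rewrite big_optionE /= mulr1 => ->.
  by rewrite lerDr lam_ge0.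
rewrite dotC ltNge => /negP[].
have tau_le0 : z None <= 0 by rewrite -dotA0.
have az_le i : dotf (a i) (z \o Some) <= b i * - z None.
  by have := Az_le0 (Some i); rewrite dotA; lra.
have [tau_lt0|tau_ge0] := ltrP (z None) 0; last first.
  have tau0 : z None = 0 by apply/eqP; rewrite eq_le tau_le0 tau_ge0.
  rewrite tau0 mulr0 add0r; apply: lp_no_recession => i.
  by have := az_le i; rewrite tau0 oppr0 mulr0.
pose q := (- z None)^-1.
have q_gt0 : 0 < q by rewrite invr_gt0 oppr_gt0.
have qtau : q * - z None = 1 by rewrite mulVf // oppr_eq0 lt_eqF.
have feas i : dotf (a i) (fun j => q * (z \o Some) j) <= b i.
  by rewrite dotf_scaler -[b i]mulr1 -qtau mulrCA ler_pM2l.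
have := lp_le feas; rewrite dotf_scaler => qcy.
have ntau_ge0 : 0 <= - z None by rewrite oppr_ge0 ltW.
have := ler_wpM2l ntau_ge0 qcy.
by rewrite mulrA (mulrC (- z None)) qtau mul1r; lra.
Qed.

End LPDuality.

Section Pigeonhole.
Variable R : archiRealFieldType.

Lemma truncn_eq_dist_lt1 (u v : R) : 0 <= u -> 0 <= v ->
  Num.truncn u = Num.truncn v -> `|u - v| < 1.
Proof.
move=> u_ge0 v_ge0 uv.
have /andP[lu hu] := truncn_itv u_ge0; have /andP[lv hv] := truncn_itv v_ge0.
rewrite uv -natr1 in lu hu; rewrite -natr1 in hv.
by rewrite ltr_norml; apply/andP; split; lra.
Qed.

(* Pigeonhole on the grid of mesh [del]: finitely many cells, infinitely
   many indices. *)
Lemma bounded_seq_close_pair (I : finType) (B del : R) (p : nat -> I -> R) :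
  0 < del -> (forall n i, `|p n i| <= B) ->
  exists r r', (r < r')%N /\ forall i, `|p r i - p r' i| < del.
Proof.
move=> del_gt0 pB.
pose u n i := (p n i + B) / del.
have u_ge0 n i : 0 <= u n i.
  apply: divr_ge0; last exact: ltW.
  by have := pB n i; rewrite ler_norml => /andP[]; lra.
pose L := Num.truncn (2 * B / del).
have uL n i : (Num.truncn (u n i) <= L)%N.
  apply: le_truncn; rewrite ler_pM2r ?invr_gt0 //.
  by have := pB n i; rewrite ler_norml => /andP[]; lra.
pose cell (k : 'I_#|{ffun I -> 'I_L.+1}|.+1) : {ffun I -> 'I_L.+1} :=
  [ffun i => inord (Num.truncn (u k i))].
have close k1 k2 : cell k1 = cell k2 -> forall i, `|p k1 i - p k2 i| < del.
  move=> c12 i; have := congr1 (fun h : {ffun I -> 'I_L.+1} => val (h i)) c12.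
  rewrite !ffunE /= !inordK ?ltnS //.
  move=> /(truncn_eq_dist_lt1 (u_ge0 _ _) (u_ge0 _ _)).
  rewrite -mulrBl opprD addrACA subrr addr0 normrM normfV (gtr0_norm del_gt0).
  by rewrite ltr_pdivrMr // mul1r.
apply: NNPP => no_pair; suff /leq_card : injective cell by rewrite card_ord ltnn.
move=> k1 k2 /close k12; apply: val_inj; apply: contra_notP no_pair => /eqP.
rewrite neq_ltn => /orP[] lt12; first by exists k1, k2.
by exists k2, k1; split=> // i; rewrite distrC.
Qed.

End Pigeonhole.

Section MetricSpace.
Context {R : realType} {T : Type} (d : T -> T -> R).
Hypothesis d_metric : is_metric d.

Lemma metric_ge0 x y : 0 <= d x y.
Proof.
case: d_metric => d0 dC dtri.
by have := dtri x y x; rewrite (proj2 (d0 x x) erefl) dC; lra.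
Qed.

Lemma metric_xx x : d x x = 0.
Proof. by case: d_metric => d0 _ _; apply/d0. Qed.

Lemma mopen_mball x r : mopen d (mball d x r).
Proof.
move=> y dxy; exists (r - d x y); first by rewrite subr_gt0.
move=> z dyz; case: d_metric => _ _ dtri.
by have := dtri x y z; rewrite /mball /= in dxy dyz *; lra.
Qed.

Lemma mcompact_bounded (h : T -> R) : mcompact d ->
  (forall x, exists2 r, 0 < r & exists c, forall y, d x y < r -> `|h y| <= c) ->
  exists B, forall y, `|h y| <= B.
Proof.
move=> d_cpt h_loc.
pose C := [set U | mopen d U /\ exists c, forall y, U y -> `|h y| <= c].
have [k [U [CU U_cover]]] : exists k (U : 'I_k -> set T),
    (forall l, C (U l)) /\ (forall x, exists l, U l x).
  apply: d_cpt => [U []//|x].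
  have [r r_gt0 [c hc]] := h_loc x.
  exists (mball d x r); last by rewrite /mball /= metric_xx.
  by split; [exact: mopen_mball | exists c].
have [c hc] := choice (fun l => proj2 (CU l)).
exists (\sum_l `|c l|) => y; have [l Uly] := U_cover y.
apply: le_trans (hc l y Uly) (le_trans (ler_norm _) _).
by rewrite (bigD1 l) //= lerDl sumr_ge0.
Qed.

Lemma mcompact_dist_bounded (x0 : T) : mcompact d ->
  exists B, forall y, d x0 y <= B.
Proof.
move=> d_cpt; have [x|B dB] := mcompact_bounded (h := d x0) d_cpt; last first.
  by exists B => y; apply: le_trans (dB y); rewrite ler_norm.
exists 1 => //; exists (d x0 x + 1) => y dxy.
rewrite ger0_norm ?metric_ge0 //; case: d_metric => _ _ dtri.
by have := dtri x0 x y; lra.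
Qed.

End MetricSpace.

Lemma fsbig_fset_set (R : nmodType) (T : choiceType) (A : set T) (F : T -> R) :
  finite_set A -> \sum_(x \in A) F x = \sum_(k : fset_set A) F (val k).
Proof. by move=> fA; rewrite fsbig_finite // big_seq_fsetE. Qed.

Lemma mem_fset_set_val (T : choiceType) (A : set T) (k : fset_set A) :
  finite_set A -> A (val k).
Proof. by move=> fA; apply/set_mem; rewrite -(in_fset_set fA) (valP k). Qed.

Section FiniteLP.
Context (R : realType) (N : nat) (X : 'I_N -> pointedType)
  (d : forall i, X i -> X i -> R) (m : 'I_N -> nat)
  (g : forall i, 'I_(m i) -> X i -> R)
  (mu : forall i, probability (borel (d i)) R) (f : (forall i, X i) -> R).

Local Notation obj := (lsip_obj X d m g mu).
Local Notation gvec := (gvec X m g).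
Local Notation gbar := (gbar X d m g mu).

Lemma lsip_obj_le_dual (A : set (forall i, X i)) y0 y w :
  finite_set A -> lsip_feasible X m g f A y0 y -> dual_feasible X d m g mu A w ->
  obj y0 y <= \sum_(x \in A) f x * w x.
Proof.
move=> fA feas [w_ge0 w_sum1 w_gbar].
rewrite fsbig_fset_set // in w_sum1; rewrite fsbig_fset_set //.
have -> : obj y0 y =
    \sum_(k : fset_set A) (y0 + \sum_l gvec (val k) l * y l) * w (val k).
  under eq_bigr do rewrite mulrDl mulr_suml.
  rewrite big_split /= -mulr_sumr w_sum1 mulr1 exchange_big /=; congr (_ + _).
  apply: eq_bigr => l _; rewrite -w_gbar fsbig_fset_set // mulr_suml.
  by apply: eq_bigr => k _; rewrite mulrAC.
apply: ler_sum => k _; have Ak := mem_fset_set_val k fA.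
by rewrite ler_wpM2r ?w_ge0 ?feas.
Qed.

Lemma dual_optimal_le_lsip_obj (A : set (forall i, X i)) y0 y w :
  finite_set A -> lp_optimal X d m g mu f A y0 y ->
  dual_optimal X d m g mu f A w -> \sum_(x \in A) f x * w x <= obj y0 y.
Proof.
move=> fA [feas y_opt] [_ w_opt].
pose a (k : fset_set A) (o : option (gidx m)) :=
  if o is Some l then gvec (val k) l else 1.
pose c (o : option (gidx m)) := if o is Some l then gbar l else 1.
pose z0 (o : option (gidx m)) := if o is Some l then y l else y0.
have dota k z : dotf (a k) z = z None + \sum_l gvec (val k) l * z (Some l).
  by rewrite /dotf big_optionE mul1r.
have dotc z : dotf c z = obj (z None) (z \o Some).
  by rewrite /dotf big_optionE mul1r.
have z0_feas k : dotf (a k) z0 <= f (val k).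
  by rewrite dota; apply: feas (mem_fset_set_val k fA).
have lp_le z : (forall k, dotf (a k) z <= f (val k)) -> dotf c z <= obj y0 y.
  move=> z_feas; rewrite dotc; apply: y_opt => x Ax.
  have xA : x \in fset_set A by rewrite in_fset_set // mem_set.
  by have := z_feas [` xA]%fset; rewrite dota.
have [lam [lam_ge0 c_comb lam_le]] := lp_duality z0_feas lp_le.
pose w' x := if (insub x : option (fset_set A)) is Some k then lam k else 0.
have w'_val k : w' (val k) = lam k by rewrite /w' valK.
have w'_feas : dual_feasible X d m g mu A w'.
  split=> [x _|| l]; first by rewrite /w'; case: insub.
    rewrite fsbig_fset_set // [RHS](c_comb None).
    by apply: eq_bigr => k _; rewrite w'_val mulr1.
  rewrite fsbig_fset_set // [RHS](c_comb (Some l)).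
  by apply: eq_bigr => k _; rewrite w'_val mulrC.
apply: le_trans (w_opt _ w'_feas) (le_trans _ lam_le).
by rewrite fsbig_fset_set //; under eq_bigr do rewrite w'_val mulrC.
Qed.

Lemma dual_optimal_value (A : set (forall i, X i)) y0 y w :
  finite_set A -> lp_optimal X d m g mu f A y0 y ->
  dual_optimal X d m g mu f A w -> \sum_(x \in A) f x * w x = obj y0 y.
Proof.
move=> fA y_opt w_opt; apply/eqP; rewrite eq_le dual_optimal_le_lsip_obj //=.
exact: lsip_obj_le_dual (proj1 y_opt) (proj1 w_opt).
Qed.

End FiniteLP.

Lemma mcontinuous_bounded (R : realType) (T : Type) (d : T -> T -> R)
    (h : T -> R) :
  is_metric d -> mcompact d -> mcontinuous d h -> exists B, forall x, `|h x| <= B.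
Proof.
move=> d_metric d_cpt h_cont; apply: (mcompact_bounded d_metric) d_cpt _ => x.
have [del del_gt0 hdel] := h_cont x 1 ltr01.
exists del => //; exists (`|h x| + 1) => y /hdel.
by have := ler_normD (h y - h x) (h x); rewrite subrK distrC; lra.
Qed.

Lemma is_face_self (R : realType) (n : nat) (P : set 'rV[R]_n) : is_face P P.
Proof.
have dot0 x : dotv 0 x = 0 by rewrite /dotv big1 // => j _; rewrite mxE mul0r.
exists 0, 0; split=> [x _|]; first by rewrite dot0.
by apply/seteqP; split=> x //= [].
Qed.

Unset Implicit Arguments.

Section Bounds.
Context {R : realType} {N : nat} {X : 'I_N -> pointedType}
  {d : forall i, X i -> X i -> R} {m : 'I_N -> nat}
  {g : forall i, 'I_(m i) -> X i -> R}
  {mu : forall i, probability (borel (d i)) R}.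
Hypotheses (d_metric : forall i, is_metric (d i))
           (X_compact : forall i, mcompact (d i)).

Lemma dsum_ge0 x y : 0 <= dsum X d x y.
Proof. by apply: sumr_ge0 => i _; apply: metric_ge0. Qed.

Lemma dist_le_dsum i x y : d i (x i) (y i) <= dsum X d x y.
Proof.
rewrite /dsum (bigD1 i) //= lerDl.
by apply: sumr_ge0 => k _; apply: metric_ge0.
Qed.

Lemma lipschitz_bounded (f : (forall i, X i) -> R) (Lf : R) :
  (forall x y, `|f x - f y| <= Lf * dsum X d x y) ->
  exists B, forall x, `|f x| <= B.
Proof.
move=> f_lip; pose x0 i : X i := point.
have [c dc] := choice (fun i =>
  mcompact_dist_bounded (d_metric i) point (X_compact i)).
exists (`|f x0| + `|Lf| * \sum_i (c i + c i)) => x.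
have dx : dsum X d x x0 <= \sum_i (c i + c i).
  apply: ler_sum => i _; case: (d_metric i) => _ dC dtri.
  have := dtri (x i) point (x0 i); rewrite dC.
  by have := dc i (x i); have := dc i (x0 i); lra.
have := ler_wpM2l (normr_ge0 Lf) dx; have := f_lip x x0.
have := ler_normD (f x - f x0) (f x0); rewrite subrK.
by have := ler_wpM2r (dsum_ge0 x x0) (ler_norm Lf); lra.
Qed.

Lemma BSS_b_g_le1 : BSS_b X d m g mu -> forall i j y, `|g i j y| <= 1.
Proof.
move=> bss i j y.
have [n [nu [e [nC [C [vt [Gv [_ [[_ cover _] _] _ Gv_g
  [Gv_ge0 _ Gv_sum1 Gv_0 _]]]]]]]]] := bss i.
have [l Cl] : exists l, C l (e y) by apply: cover; exists y.
rewrite -Gv_g ger0_norm ?Gv_ge0 // -(Gv_sum1 l (C l) (is_face_self _) y Cl).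
have [v|nv] := pselect (is_vertex (C l) (vt (lift ord0 j))).
  by rewrite (bigD1 (lift ord0 j)) ?asboolT //= lerDl sumr_ge0.
by rewrite (Gv_0 _ _ _ (is_face_self _) nv y Cl) sumr_ge0.
Qed.

Hypothesis BSS : BSS_a X d m g mu \/ BSS_b X d m g mu.

Lemma BSS_g_bounded i j : exists c, forall y, `|g i j y| <= c.
Proof.
case: BSS => [bss | /BSS_b_g_le1 g_le1]; last by exists 1.
have [_ g_cont _] := bss i.
exact: mcontinuous_bounded (d_metric i) (X_compact i) (g_cont j).
Qed.

Lemma gvec_bounded : exists B, forall x k, `|gvec X m g x k| <= B.
Proof.
have [c gc] := choice (fun k : gidx m => BSS_g_bounded (tag k) (tagged k)).
exists (\sum_k `|c k|) => x k; apply: le_trans (gc k _) (le_trans (ler_norm _) _).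
by rewrite (bigD1 k) //= lerDl sumr_ge0.
Qed.

End Bounds.

Section SetFunctionIntegral.
Local Open Scope ereal_scope.
Context {d} {T : measurableType d} {R : realType}.
Import HBNNSimple.

Lemma eq_setfun_integral (m1 m2 : set T -> \bar R) (f : T -> \bar R) :
  (forall A, measurable A -> m1 A = m2 A) ->
  \int[m1]_x f x = \int[m2]_x f x.
Proof.
move=> m12; rewrite /integral.
by congr (ereal_sup _ - ereal_sup _); apply/seteqP; split=> _ [h hf <-];
  exists h => //; apply: eq_fsbigr => r _; rewrite m12.
Qed.

End SetFunctionIntegral.

Section ProbabilitySetFunction.
Local Open Scope ereal_scope.
Context {d} {T : measurableType d} {R : realType} {P : set T -> \bar R}.
Hypothesis P_prob : is_probability P.

(* [P] need not be nonnegative on non-measurable sets, hence the reset to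
   [0] there; the dummy [let] makes the definition depend on [P_prob], which
   the measure instance below needs. *)
Definition measure_of_prob : set T -> \bar R :=
  let _ := P_prob in fun A => if `[< measurable A >] then P A else 0.

Lemma measure_of_probE A : measurable A -> measure_of_prob A = P A.
Proof. by move=> mA; rewrite /measure_of_prob asboolT. Qed.

Let measure_of_prob0 : measure_of_prob set0 = 0.
Proof. by rewrite measure_of_probE //; case: P_prob. Qed.

Let measure_of_prob_ge0 A : 0 <= measure_of_prob A.
Proof.
by rewrite /measure_of_prob; case: asboolP => // mA; case: P_prob => _ + _ _; apply.
Qed.

Let measure_of_prob_sigma_additive : semi_sigma_additive measure_of_prob.
Proof.
move=> F mF tF mU; rewrite measure_of_probE //.
under eq_fun do under eq_bigr do rewrite measure_of_probE //.
by case: P_prob => _ _ + _; apply.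
Qed.

HB.instance Definition _ := isMeasure.Build _ _ _ measure_of_prob
  measure_of_prob0 measure_of_prob_ge0 measure_of_prob_sigma_additive.

Lemma measure_of_probT : (measure_of_prob : measure T R) setT = 1.
Proof. by case: P_prob => _ _ _ <-; exact: measure_of_probE. Qed.

Lemma measure_of_prob_lty : (measure_of_prob : measure T R) setT < +oo.
Proof. by rewrite measure_of_probT ltry. Qed.

Lemma integral_measure_of_prob (f : T -> \bar R) :
  \int[(measure_of_prob : measure T R)]_x f x = \int[P]_x f x.
Proof. by apply: eq_setfun_integral => A /measure_of_probE. Qed.

End ProbabilitySetFunction.

Lemma maxr_sub_maxrN (R : realDomainType) (x : R) :
  Num.max x 0 - Num.max (- x) 0 = x.
Proof. by rewrite !maxEle; case: leP => ?; case: leP => ?; lra. Qed.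

Section DiscreteMeasure.
Context {d} {T : measurableType d} {R : realType} {U : Type} (x0 : U)
  (phi : U -> T) (w : U -> R).

Definition dirac_term (s : seq U) (k : nat) : measure T R :=
  mscale (`|w (nth x0 s k)|)%:nng (\d_(phi (nth x0 s k))).

Definition dirac_seq (s : seq U) : measure T R := msum (dirac_term s) (size s).

Local Open Scope ereal_scope.

Lemma dirac_seqE s A :
  dirac_seq s A = \sum_(x <- s) (`|w x|)%:E * \d_(phi x) A.
Proof. by rewrite /= /msum (big_nth x0) big_mkord. Qed.

Lemma ge0_integral_dirac_term s k (h : T -> \bar R) :
  measurable_fun setT h -> (forall x, 0 <= h x) ->
  \int[dirac_term s k]_x h x = (`|w (nth x0 s k)|)%:E * h (phi (nth x0 s k)).
Proof.
by move=> mh h_ge0; rewrite ge0_integral_mscale // integral_dirac // diracT mul1e.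
Qed.

Lemma integral_dirac_seq s (h : T -> R) : measurable_fun setT h ->
  \int[dirac_seq s]_x (h x)%:E = (\sum_(x <- s) `|w x| * h (phi x))%R%:E.
Proof.
move=> mh; have mEh : measurable_fun setT (EFin \o h) by apply/measurable_EFinP.
have mEhp := measurable_funepos mEh; have mEhn := measurable_funeneg mEh.
rewrite integralE !ge0_integral_measure_sum //.
under eq_bigr do
  rewrite ge0_integral_dirac_term // funeposE /= -EFin_max -EFinM.
under [X in _ - X]eq_bigr do
  rewrite ge0_integral_dirac_term // funenegE /= -EFin_max -EFinM.
rewrite !sumEFin -EFinB -sumrB (big_nth x0) big_mkord; congr EFin.
by apply: eq_bigr => k _; rewrite -mulrBr maxr_sub_maxrN.
Qed.

End DiscreteMeasure.

Lemma bounded_integrable {d} {T : measurableType d} {R : realType}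
    {P : measure T R} {h : T -> R} {B : R} :
  (P setT < +oo)%E -> measurable_fun setT h -> (forall x, `|h x| <= B) ->
  P.-integrable setT (EFin \o h).
Proof.
move=> PT mh hB; apply: measurable_bounded_integrable => //.
exists B; split=> [|M BM x _]; first exact: num_real.
exact: le_trans (hB x) (ltW BM).
Qed.

Section LSIPMeasurability.
Context {R : realType} {N : nat} {X : 'I_N -> pointedType}
  {d : forall i, X i -> X i -> R}.
Hypothesis d_metric : forall i, is_metric (d i).

Local Notation prodX := (prodX X d).

Definition proj (i : 'I_N) (x : prodX) : borel (d i) := x i.

Lemma mopen_proj_preimage i (U : set (X i)) :
  mopen (d i) U -> mopen (dsum X d) (proj i @^-1` U).
Proof.
move=> oU x /oU[r r_gt0 rU]; exists r => // y dxy; apply: rU.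
exact: le_lt_trans (dist_le_dsum d_metric i x y) dxy.
Qed.

Lemma measurable_proj i : measurable_fun [set: prodX] (proj i).
Proof.
apply: (@measurability _ _ prodX (borel (d i)) setT (proj i) (mopen (d i)))
  => // _ [B oB <-].
by apply: sub_sigma_algebra; rewrite setTI; exact: mopen_proj_preimage.
Qed.

Lemma mopen_lipschitz_gt (f : prodX -> R) (Lf a : R) : 0 < Lf ->
  (forall x y, `|f x - f y| <= Lf * dsum X d x y) ->
  mopen (dsum X d) (f @^-1` `]a, +oo[).
Proof.
move=> Lf_gt0 f_lip x; rewrite /= in_itv /= andbT => ax.
exists ((f x - a) / Lf) => [|y]; first by rewrite divr_gt0 // subr_gt0.
rewrite /mball /= in_itv /= andbT ltr_pdivlMr // mulrC => dxy.
by have := f_lip x y; have := ler_norm (f x - f y); lra.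
Qed.

Lemma measurable_lipschitz (f : prodX -> R) (Lf : R) : 0 < Lf ->
  (forall x y, `|f x - f y| <= Lf * dsum X d x y) ->
  measurable_fun [set: prodX] f.
Proof.
move=> Lf_gt0 f_lip.
apply: (@measurability _ _ prodX R setT f _ (RGenOInfty.measurableE R))
  => // _ [_ [a ->] <-].
by apply: sub_sigma_algebra; rewrite setTI; exact: mopen_lipschitz_gt f_lip.
Qed.

End LSIPMeasurability.

Section GammaLowerBound.
Context {R : realType} {N : nat} {X : 'I_N -> pointedType}
  {d : forall i, X i -> X i -> R} {m : 'I_N -> nat}
  {g : forall i, 'I_(m i) -> X i -> R}
  {mu : forall i, probability (borel (d i)) R} {f : (forall i, X i) -> R}
  {Lf : R}.
Hypotheses (d_metric : forall i, is_metric (d i))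
           (X_compact : forall i, mcompact (d i))
           (Lf_gt0 : 0 < Lf)
           (f_lip : forall x y, `|f x - f y| <= Lf * dsum X d x y)
           (g_int : forall i (j : 'I_(m i)),
              (mu i).-integrable setT (fun x => (g i j x)%:E))
           (BSS : BSS_a X d m g mu \/ BSS_b X d m g mu).

Local Notation prodX := (prodX X d).
Local Notation obj := (lsip_obj X d m g mu).
Local Notation gvec := (gvec X m g).
Local Notation gbar := (gbar X d m g mu).
Local Notation proj := (@proj R N X d).

Lemma measurable_gvec k : measurable_fun [set: prodX] (gvec ^~ k).
Proof.
apply: (measurableT_comp _ (measurable_proj d_metric (tag k))).
by have /integrableP[/measurable_EFinP] := g_int (tag k) (tagged k).
Qed.

Lemma integrable_gvec {P : measure prodX R} k :
  (P setT < +oo)%E -> P.-integrable setT (fun x => (gvec x k)%:E).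
Proof.
move=> PT.
have [c gc] := BSS_g_bounded d_metric X_compact BSS (tag k) (tagged k).
exact: bounded_integrable PT (measurable_gvec k) (fun x => gc _).
Qed.

Lemma integral_gvec_Gamma (P : set prodX -> \bar R) (P_prob : is_probability P) :
  Gamma X d m g mu P ->
  forall k, (\int[measure_of_prob P_prob]_x (gvec x k)%:E = (gbar k)%:E)%E.
Proof.
move=> [_ marg] [i j].
have PmT := measure_of_prob_lty P_prob.
have /integrableP[mg _] := g_int i j.
have int_gij : (measure_of_prob P_prob).-integrable
    (proj i @^-1` [set: borel (d i)]) ((EFin \o g i j) \o proj i).
  by rewrite preimage_setT; exact: integrable_gvec (Tagged _ j) PmT.
have := @integral_pushforward _ _ _ _ R (proj i) (measurable_proj d_metric i)
  (measure_of_prob P_prob) setT _ mg int_gij measurableT.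
rewrite preimage_setT => <-.
rewrite (eq_setfun_integral _ (pushforward P (proj i))) => [|B mB].
  by rewrite marg /gbar /Rintegral fineK //; apply: integrable_fin_num.
apply: measure_of_probE.
by rewrite -[_ @^-1` _]setTI; exact: measurable_proj d_metric i measurableT _ mB.
Qed.

Local Open Scope ereal_scope.

Lemma EFin_constraint y0 y :
  (fun x => (y0 + \sum_k gvec x k * y k)%:E) =
  (fun x => y0%:E + \sum_k (y k)%:E * (gvec x k)%:E).
Proof.
apply/funext => x; rewrite EFinD -sumEFin; congr (_ + _).
by apply: eq_bigr => k _; rewrite EFinM muleC.
Qed.

Lemma integrable_constraint_terms {P : measure prodX R} y0 y : P setT < +oo ->
  P.-integrable setT (fun=> y0%:E) /\
  P.-integrable setT (fun x => \sum_k (y k)%:E * (gvec x k)%:E).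
Proof.
move=> PT; split.
  exact: (bounded_integrable (h := cst y0) PT (measurable_cst y0)
    (fun=> lexx `|y0|%R)).
by apply: integrable_sum => // k _; apply/integrableZl/integrable_gvec.
Qed.

Lemma integrable_constraint {P : measure prodX R} y0 y : P setT < +oo ->
  P.-integrable setT (fun x => (y0 + \sum_k gvec x k * y k)%:E).
Proof.
move=> PT; have [int_cst int_sum] := integrable_constraint_terms y0 y PT.
by rewrite EFin_constraint; apply: integrableD.
Qed.

Lemma integral_constraint {P : measure prodX R} y0 y : P setT = 1 ->
  (forall k, \int[P]_x (gvec x k)%:E = (gbar k)%:E) ->
  \int[P]_x (y0 + \sum_k gvec x k * y k)%:E = (obj y0 y)%:E.
Proof.
move=> PT1 P_gvec; have PT : P setT < +oo by rewrite PT1 ltry.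
have [int_cst int_sum] := integrable_constraint_terms y0 y PT.
rewrite EFin_constraint integralD // integral_cst // PT1 mule1.
rewrite integral_sum; [|by []|by move=> k; apply/integrableZl/integrable_gvec].
rewrite /lsip_obj EFinD -sumEFin; congr (_ + _); apply: eq_bigr => k _.
rewrite integralZl; [|by []|exact: integrable_gvec].
by rewrite P_gvec EFinM muleC.
Qed.

Lemma Gamma_integral_ge (P : set prodX -> \bar R) y0 y : Gamma X d m g mu P ->
  lsip_feasible X m g f setT y0 y -> (obj y0 y)%:E <= \int[P]_x (f x)%:E.
Proof.
move=> PG feas; have [P_prob _] := PG.
have PmT := measure_of_prob_lty P_prob.
have [B fB] := lipschitz_bounded d_metric X_compact f Lf f_lip.
rewrite -(integral_measure_of_prob P_prob) -(integral_constraint y0 y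
  (measure_of_probT P_prob) (integral_gvec_Gamma _ P_prob PG)).
apply: le_integral => [||| x _]; first by [].
- exact: integrable_constraint.
- exact: (bounded_integrable (h := f : prodX -> R) PmT
    (measurable_lipschitz f Lf Lf_gt0 f_lip) fB).
- by rewrite lee_fin feas.
Qed.

Lemma lsip_obj_le_mmot_value {y0 y} : lsip_feasible X m g f setT y0 y ->
  (obj y0 y)%:E <= mmot_value X d m g mu f.
Proof.
move=> feas; apply: le_ereal_inf_tmp => _ [P [PG ->]].
exact: Gamma_integral_ge.
Qed.

End GammaLowerBound.

Section DiscreteMeasureGamma.
Context {R : realType} {N : nat} {X : 'I_N -> pointedType}
  {d : forall i, X i -> X i -> R} {m : 'I_N -> nat}
  {g : forall i, 'I_(m i) -> X i -> R}
  {mu : forall i, probability (borel (d i)) R}.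
Hypothesis g_int : forall i (j : 'I_(m i)),
  (mu i).-integrable setT (fun x => (g i j x)%:E).

Local Notation prodX := (prodX X d).
Local Notation proj := (@proj R N X d).

Let x0 : prodX := fun i => point.

Lemma discrete_measureE (A : set prodX) (w : prodX -> R) : finite_set A ->
  (forall x, A x -> 0 <= w x) ->
  discrete_measure X d A w = dirac_seq x0 id w (fset_set A).
Proof.
move=> fA w_ge0; apply/funext => B; rewrite dirac_seqE /discrete_measure.
rewrite fsbig_finite // big_seq [RHS]big_seq; apply: eq_bigr => x.
by rewrite in_fset_set // => /set_mem Ax; rewrite ger0_norm ?w_ge0.
Qed.

Lemma integral_discrete_measure (A : set prodX) (w h : prodX -> R) :
  finite_set A -> (forall x, A x -> 0 <= w x) -> measurable_fun setT h ->
  (\int[discrete_measure X d A w]_x (h x)%:E = (\sum_(x \in A) w x * h x)%:E)%E.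
Proof.
move=> fA w_ge0 mh; rewrite discrete_measureE // integral_dirac_seq //.
rewrite fsbig_finite //; congr EFin; rewrite big_seq [RHS]big_seq.
apply: eq_bigr => x; rewrite in_fset_set // => /set_mem Ax.
by rewrite ger0_norm ?w_ge0.
Qed.

Lemma dual_feasible_Gamma (A : set prodX) (w : prodX -> R) : finite_set A ->
  dual_feasible X d m g mu A w -> Gamma X d m g mu (discrete_measure X d A w).
Proof.
move=> fA [w_ge0 w_sum1 w_gbar].
have sum_abs (F : prodX -> R) :
    \sum_(x <- fset_set A) `|w x| * F x = \sum_(x \in A) w x * F x.
  rewrite fsbig_finite // big_seq [RHS]big_seq; apply: eq_bigr => x.
  by rewrite in_fset_set // => /set_mem Ax; rewrite ger0_norm ?w_ge0.
rewrite discrete_measureE //; split.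
  split=> [|B _||]; [exact: measure0 | exact: measure_ge0 |
    exact: measure_semi_sigma_additive |].
  rewrite dirac_seqE; under eq_bigr do rewrite diracT mule1.
  rewrite sumEFin -w_sum1 (eq_fsbigr (fun x => w x * 1)) => [|x _]; last first.
    by rewrite mulr1.
  by rewrite -sum_abs; congr EFin; apply: eq_bigr => x _; rewrite mulr1.
move=> i j; have /integrableP[mg _] := g_int i j.
rewrite (_ : pushforward _ _ = dirac_seq x0 (proj i) w (fset_set A)); last first.
  by apply/funext => B; rewrite /pushforward !dirac_seqE; apply: eq_bigr => x _;
    rewrite !diracE.
rewrite integral_dirac_seq; last exact/measurable_EFinP.
rewrite -[RHS]fineK; last exact: integrable_fin_num.
rewrite -[fine _]/(gbar X d m g mu (Tagged _ j)) -w_gbar.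
by rewrite (eq_fsbigr (fun x => w x * gvec X m g x (Tagged _ j))) ?sum_abs //
  => x _; rewrite mulrC.
Qed.

End DiscreteMeasureGamma.

Section Algorithm1.
Context {R : realType} {N : nat} {X : 'I_N -> pointedType}
  {d : forall i, X i -> X i -> R} {m : 'I_N -> nat}
  {g : forall i, 'I_(m i) -> X i -> R}
  {mu : forall i, probability (borel (d i)) R} {f : (forall i, X i) -> R}.

Local Notation obj := (lsip_obj X d m g mu).
Local Notation gvec := (gvec X m g).

Lemma lp_optimal_obj_ge {B : R} {A : set (forall i, X i)} {y0 y} :
  (forall x, `|f x| <= B) -> lp_optimal X d m g mu f A y0 y -> - B <= obj y0 y.
Proof.
move=> fB [_ y_opt]; have obj0 : obj (- B) (fun=> 0) = - B.
  by rewrite /lsip_obj big1 ?addr0 // => k _; rewrite mulr0.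
rewrite -obj0; apply: y_opt => x _; rewrite big1 ?addr0 => [|k _]; last first.
  by rewrite mulr0.
by have := fB x; rewrite ler_norml => /andP[].
Qed.

(* The cut generated at an earlier oracle point [x] bounds the current gap. *)
Lemma oracle_gap_le {A : set (forall i, X i)} {y0 y x xs s} :
  lsip_feasible X m g f A y0 y -> A x -> oracle_output X m g f y xs s ->
  y0 - s <= `|f x - f xs| + \sum_k `|gvec xs k - gvec x k| * `|y k|.
Proof.
move=> feas Ax [_ ->]; have := feas x Ax.
have gap : \sum_k gvec xs k * y k - \sum_k gvec x k * y k <=
    \sum_k `|gvec xs k - gvec x k| * `|y k|.
  rewrite -sumrB; apply: ler_sum => k _; rewrite -mulrBl -normrM.
  exact: ler_norm.
by have := ler_norm (f x - f xs); lra.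
Qed.

Lemma oracle_feasible {y xs s} :
  oracle_output X m g f y xs s -> lsip_feasible X m g f setT s y.
Proof. by move=> [xs_min ->] x _; have := xs_min x; lra. Qed.

Lemma lsip_value_le_lp {A : set (forall i, X i)} {y0 y} :
  lp_optimal X d m g mu f A y0 y -> (lsip_value X d m g mu f <= (obj y0 y)%:E)%E.
Proof.
move=> [_ y_opt]; apply: ge_ereal_sup => _ [y0' [y' [feas ->]]].
by rewrite lee_fin; apply: y_opt => x _; apply: feas.
Qed.

Lemma lsip_obj_le_value {y0 y} : lsip_feasible X m g f setT y0 y ->
  ((obj y0 y)%:E <= lsip_value X d m g mu f)%E.
Proof. by move=> feas; apply: ereal_sup_ubound; exists y0, y. Qed.

End Algorithm1.

Section Run.
Context {R : realType} {N : nat} {X : 'I_N -> pointedType}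
  {d : forall i, X i -> X i -> R} {m : 'I_N -> nat}
  {g : forall i, 'I_(m i) -> X i -> R}
  {mu : forall i, probability (borel (d i)) R} {f : (forall i, X i) -> R}
  {Lf : R}.
Hypotheses (d_metric : forall i, is_metric (d i))
           (X_compact : forall i, mcompact (d i))
           (f_lip : forall x y, `|f x - f y| <= Lf * dsum X d x y)
           (BSS : BSS_a X d m g mu \/ BSS_b X d m g mu).
Context {X0 : set (forall i, X i)} {eps : R}
  {Xd : nat -> set (forall i, X i)} {y0 : nat -> R} {y : nat -> gidx m -> R}
  {w : nat -> (forall i, X i) -> R} {xs : nat -> forall i, X i}
  {s : nat -> R} {Xs : nat -> set (forall i, X i)}.
Hypotheses (X0_fin : finite_set X0)
  (X0_bdd : lp_bounded_superlevel X d m g mu f X0) (eps_gt0 : 0 < eps)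
  (run_init : Xd 0%N = X0)
  (run_step : forall r : nat,
      (forall k : nat, (k < r)%N -> ~ (y0 k - s k <= eps)) ->
      [/\ lp_optimal X d m g mu f (Xd r) (y0 r) (y r),
          dual_optimal X d m g mu f (Xd r) (w r),
          oracle_output X m g f (y r) (xs r) (s r) &
          ~ (y0 r - s r <= eps) ->
            [/\ finite_set (Xs r), Xs r (xs r) &
                Xd r.+1 = Xd r `|` Xs r]]).

Section NeverStops.
Hypothesis never_stops : forall r, ~ (y0 r - s r <= eps).

Let step r := run_step r (fun k _ => never_stops k).

Lemma run_sets_mono {r r'} : (r <= r')%N -> Xd r `<=` Xd r'.
Proof.
move=> /subnKC <-; elim: (r' - r)%N => [|k IH]; first by rewrite addn0.
have [_ _ _ /(_ (never_stops _)) [_ _ XdS]] := step (r + k).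
by rewrite addnS XdS; apply: subset_trans IH _; apply: subsetUl.
Qed.

Lemma run_oracle_point_kept {r r'} : (r < r')%N -> Xd r' (xs r).
Proof.
move=> /run_sets_mono; apply.
by have [_ _ _ /(_ (never_stops r)) [_ xs_r ->]] := step r; right.
Qed.

Lemma run_dual_bounded : exists M, forall r k, `|y r k| <= M.
Proof.
have [B fB] := lipschitz_bounded d_metric X_compact f Lf f_lip.
have [M yM] := X0_bdd (- B); exists M => r k.
have [y_opt _ _ _] := step r.
have feas0 : lsip_feasible X m g f X0 (y0 r) (y r).
  move=> x X0x; apply: y_opt.1; apply: (run_sets_mono (leq0n r)).
  by rewrite run_init.
exact: (yM _ _ feas0 (lp_optimal_obj_ge fB y_opt)).2.
Qed.

Lemma never_stops_false : False.
Proof.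
have [BF fB] := lipschitz_bounded d_metric X_compact f Lf f_lip.
have [BG gB] := gvec_bounded d_metric X_compact BSS.
have [M yM] := run_dual_bounded.
pose K := #|{: gidx m}|; pose del := eps / (1 + K%:R * `|M|).
have den_gt0 : 0 < 1 + K%:R * `|M| by rewrite ltr_pwDl // mulr_ge0.
have del_eps : del + K%:R * (del * `|M|) = eps.
  by rewrite -[eps in RHS](divfK (lt0r_neq0 den_gt0)) -/del; ring.
pose p n (o : option (gidx m)) :=
  if o is Some k then gvec X m g (xs n) k else f (xs n).
have pB n o : `|p n o| <= `|BF| + `|BG|.
  case: o => [k|] /=; [apply: le_trans (gB _ k) _ | apply: le_trans (fB _) _].
    by rewrite (le_trans (ler_norm _)) // lerDr.
  by rewrite (le_trans (ler_norm _)) // lerDl.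
have [r [r' [rr' close]]] := bounded_seq_close_pair (divr_gt0 eps_gt0 den_gt0) pB.
have [[feas _] _ orc _] := step r'; apply: (never_stops r').
apply: le_trans (oracle_gap_le feas (run_oracle_point_kept rr') orc) _.
have g_close : \sum_k `|gvec X m g (xs r') k - gvec X m g (xs r) k| * `|y r' k|
    <= K%:R * (del * `|M|).
  have -> : K%:R * (del * `|M|) = \sum_(k : gidx m) del * `|M|.
    by rewrite sumr_const mulr_natl.
  apply: ler_sum => k _.
  apply: ler_pM => //; last exact: le_trans (yM r' k) (ler_norm M).
  by rewrite distrC ltW // (close (Some k)).
by have := ltW (close None); rewrite /= -/del; lra.
Qed.

End NeverStops.

Lemma algorithm1_first_stop : exists r,
  y0 r - s r <= eps /\ forall k, (k < r)%N -> ~ (y0 k - s k <= eps).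
Proof.
have [r stop_r] : exists r, y0 r - s r <= eps.
  apply: NNPP => no_stop; apply: never_stops_false => r stop_r.
  by apply: no_stop; exists r.
have stops : exists r, `[< y0 r - s r <= eps >] by exists r; apply/asboolP.
case: (ex_minnP stops) => r0 /asboolP stop_r0 min_r0; exists r0; split=> // k k_r0.
by move=> /asboolT /min_r0; rewrite leqNgt k_r0.
Qed.

Lemma run_sets_finite r :
  (forall k, (k < r)%N -> ~ (y0 k - s k <= eps)) -> finite_set (Xd r).
Proof.
elim: r => [|r IH] no_stop; first by rewrite run_init.
have no_stop' k : (k < r)%N -> ~ (y0 k - s k <= eps).
  by move=> k_r; apply: no_stop; apply: ltnW.
have [_ _ _ /(_ (no_stop r (ltnSn r))) [fin_Xs _ ->]] := run_step r no_stop'.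
by rewrite finite_setU; split=> //; apply: IH.
Qed.

End Run.

Section Guarantees.
Context {R : realType} {N : nat} {X : 'I_N -> pointedType}
  {d : forall i, X i -> X i -> R} {m : 'I_N -> nat}
  {g : forall i, 'I_(m i) -> X i -> R}
  {mu : forall i, probability (borel (d i)) R} {f : (forall i, X i) -> R}
  {Lf : R}.
Hypotheses (d_metric : forall i, is_metric (d i))
           (X_compact : forall i, mcompact (d i))
           (Lf_gt0 : 0 < Lf)
           (f_lip : forall x y, `|f x - f y| <= Lf * dsum X d x y)
           (g_int : forall i (j : 'I_(m i)),
              (mu i).-integrable setT (fun x => (g i j x)%:E))
           (BSS : BSS_a X d m g mu \/ BSS_b X d m g mu).

Local Notation obj := (lsip_obj X d m g mu).

Lemma algorithm1_guarantees {A : set (forall i, X i)} {y0 y w xs s eps} :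
  finite_set A -> lp_optimal X d m g mu f A y0 y ->
  dual_optimal X d m g mu f A w -> oracle_output X m g f y xs s ->
  y0 - s <= eps ->
  let aUB := obj y0 y in
  let aLB := aUB - y0 + s in
  let hatmu := discrete_measure X d A w in
  [/\ (aLB%:E <= lsip_value X d m g mu f <= aUB%:E)%E /\ aUB - aLB <= eps,
      (lsip_feasible X m g f setT s y /\
       (lsip_value X d m g mu f <= (obj s y + eps)%:E)%E) /\ obj s y = aLB &
      (Gamma X d m g mu hatmu /\
       (\int[hatmu]_x (f x)%:E <= mmot_value X d m g mu f + eps%:E)%E) /\
      (\int[hatmu]_x (f x)%:E)%E = aUB%:E].
Proof.
move=> fA y_opt w_opt orc gap aUB aLB hatmu.
have feas := oracle_feasible orc.
have aLBE : obj s y = aLB by rewrite /aLB /aUB /lsip_obj; ring.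
have value_le := lsip_value_le_lp y_opt.
have [[w_ge0 _ _] _] := w_opt.
have int_f : (\int[hatmu]_x (f x)%:E)%E = aUB%:E.
  rewrite integral_discrete_measure //.
    rewrite /aUB -(dual_optimal_value fA y_opt w_opt).
    by under eq_fsbigr do rewrite mulrC.
  exact: measurable_lipschitz f Lf Lf_gt0 f_lip.
split.
- split; last by rewrite /aLB; lra.
  by rewrite -aLBE lsip_obj_le_value //= (le_trans value_le).
- split=> //; split=> //.
  by apply: le_trans value_le _; rewrite lee_fin aLBE /aLB /aUB; lra.
split=> //; split; first exact: dual_feasible_Gamma g_int A w fA (proj1 w_opt).
have mmot_ge :=
  lsip_obj_le_mmot_value d_metric X_compact Lf_gt0 f_lip g_int BSS feas.
rewrite int_f; apply: le_trans (leeD mmot_ge (lexx _)).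
by rewrite -EFinD lee_fin aLBE /aLB; lra.
Qed.

End Guarantees.

Theorem proposition4p8 (R : realType) (N : nat) (X : 'I_N -> pointedType)
  (d : forall i : 'I_N, X i -> X i -> R)
  (d_metric : forall i, is_metric (d i))
  (X_compact : forall i, mcompact (d i))
  (mu : forall i : 'I_N, probability (borel (d i)) R)
  (f : (forall i : 'I_N, X i) -> R) (Lf : R) (Lf_gt0 : 0 < Lf)
  (f_lip : forall x y, `|f x - f y| <= Lf * dsum X d x y)
  (m : 'I_N -> nat) (g : forall i : 'I_N, 'I_(m i) -> X i -> R)
  (g_int : forall i (j : 'I_(m i)),
      (mu i).-integrable setT (fun x => (g i j x)%:E))
  (BSS : BSS_a X d m g mu \/ BSS_b X d m g mu)
  (X0 : set (forall i : 'I_N, X i)) (X0_fin : finite_set X0)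
  (X0_bdd : lp_bounded_superlevel X d m g mu f X0)
  (eps : R) (eps_gt0 : 0 < eps)
  (* a run of Algorithm 1: LP/dual optimizers, oracle outputs, added sets *)
  (Xd : nat -> set (forall i : 'I_N, X i))
  (y0 : nat -> R) (y : nat -> gidx m -> R)
  (w : nat -> (forall i : 'I_N, X i) -> R)
  (xs : nat -> forall i : 'I_N, X i) (s : nat -> R)
  (Xs : nat -> set (forall i : 'I_N, X i))
  (run_init : Xd 0%N = X0)
  (run_step : forall r : nat,
      (forall k : nat, (k < r)%N -> ~ (y0 k - s k <= eps)) ->
      [/\ lp_optimal X d m g mu f (Xd r) (y0 r) (y r),
          dual_optimal X d m g mu f (Xd r) (w r),
          oracle_output X m g f (y r) (xs r) (s r) &
          ~ (y0 r - s r <= eps) ->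
            [/\ finite_set (Xs r), Xs r (xs r) &
                Xd r.+1 = Xd r `|` Xs r]]) :
  exists r : nat,
    [/\ (* (i) termination at iteration r *)
        y0 r - s r <= eps,
        forall k : nat, (k < r)%N -> ~ (y0 k - s k <= eps) &
        let aUB := lsip_obj X d m g mu (y0 r) (y r) in
        let aLB := aUB - y0 r + s r in
        let hatmu := discrete_measure X d (Xd r) (w r) in
        [/\ (* (ii) *)
            (aLB%:E <= lsip_value X d m g mu f <= aUB%:E)%E /\ aUB - aLB <= eps,
            (* (iii) *)
            (lsip_feasible X m g f setT (s r) (y r) /\
             (lsip_value X d m g mu f
                <= (lsip_obj X d m g mu (s r) (y r) + eps)%:E)%E) /\
            lsip_obj X d m g mu (s r) (y r) = aLB &
            (* (iv) *)
            (Gamma X d m g mu hatmu /\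
             (\int[hatmu]_x (f x)%:E <= mmot_value X d m g mu f + eps%:E)%E) /\
            (\int[hatmu]_x (f x)%:E)%E = aUB%:E]].
Proof.
have [r [stop_r before_r]] := algorithm1_first_stop d_metric X_compact f_lip
  BSS X0_bdd eps_gt0 run_init run_step.
have [y_opt w_opt orc _] := run_step r before_r.
exists r; split=> //.
exact (algorithm1_guarantees d_metric X_compact Lf_gt0 f_lip g_int BSS
  (run_sets_finite X0_fin run_init run_step r before_r) y_opt w_opt orc stop_r).
Qed.
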